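(* Let $A$ be a finite set of alternatives with $|A|\ge 3$ and let $\mathbb{D}$ be a minimally rich domain of linear orders over $A$ that is connected with two distinct neighbours. If $f:\mathbb{D}^2\to A$ (two voters) is unanimous and strategy-proof, then $f$ satisfies dictatorship.
   Context: A domain is a set $\mathbb{D}$ of linear orders (strict preferences) over $A$; a profile for voters $\{1,2\}$ is $(P_1,P_2)\in\mathbb{D}^2$. For a linear order $P_i$, $r_k(P_i)$ is its $k$-th ranked alternative. $\mathbb{D}$ is minimally rich if every $a\in A$ is ranked first in some $P_i\in\mathbb{D}$. Two linear orders $P_i,P_i'$ are adjacent if $P_i'$ is obtained from $P_i$ by swapping two consecutively ranked alternatives and leaving all other ranks unchanged. A social choice function $f:\mathbb{D}^2\to A$ is unanimous if $f(P)=a$ whenever both voters rank $a$ first; strategy-proof if there is no voter $i$, profile $P$ and $P_i'\in\mathbb{D}$ with $f(P_i',P_{-i})\,P_i\,f(P_i,P_{-i})$; and satisfies dictatorship if there is a voter $i$ with $f(P)=r_1(P_i)$ for all $P\in\mathbb{D}^2$. A path in $\mathbb{D}$ is a sequence of distinct preferences in $\mathbb{D}$ in which consecutive ones are adjacent; $\mathbb{D}$ is connected if any two of its preferences are joined by a path in $\mathbb{D}$. For $\bar{\mathbb{D}}\subseteq\mathbb{D}$, a neighbour of $\bar{\mathbb{D}}$ in $\mathbb{D}$ is a $P_i\in\mathbb{D}\setminus\bar{\mathbb{D}}$ adjacent to some element of $\bar{\mathbb{D}}$. Two preferences $P_i,P_i'\in\mathbb{D}$ are top-connected in $\mathbb{D}$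 if there is a path from $P_i$ to $P_i'$ in $\mathbb{D}$ all of whose members have the same top-ranked alternative. The top-connected closure $\mathbb{D}^{TCC}(P_i)$ is the set of preferences in $\mathbb{D}$ top-connected to $P_i$, together with $P_i$. $\mathbb{D}$ is connected with two distinct neighbours if (1) $\mathbb{D}$ is connected, and (2) for every $P_i\in\mathbb{D}$ there exist two neighbours $P_i',P_i''$ of $\mathbb{D}^{TCC}(P_i)$ in $\mathbb{D}$ with $r_1(P_i')\ne r_1(P_i'')$. *)

From mathcomp Require Import all_boot.
Set Implicit Arguments. Unset Strict Implicit. Unset Printing Implicit Defensive.

(* A linear order (strict preference) over the finite set A, represented by
   its ranking: r k = the (k+1)-th ranked alternative, k : 'I_m with
   m := #|A|.-1.+1 (= #|A| whenever A is nonempty; written this way so that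
   the first rank ord0 exists), required to be injective, hence (for A
   nonempty) a bijection onto A. *)
Section Prefs.
Variable A : finType.

Definition pref := {r : {ffun 'I_(#|A|.-1.+1) -> A} | injectiveb r}.

Definition rk (P : pref) (k : 'I_(#|A|.-1.+1)) : A := (val P) k.

Definition rank_of (P : pref) (a : A) : nat := index a (codom (val P)).

Definition prefers (P : pref) (a b : A) : bool := rank_of P a < rank_of P b.

Definition top (P : pref) : A := rk P ord0.

Definition minimally_rich (D : {set pref}) : Prop :=
  forall a : A, exists2 P, P \in D & top P = a.

Definition adjacent (P P' : pref) : Prop :=
  exists (k k' : 'I_(#|A|.-1.+1)), [/\ val k' = (val k).+1,
    rk P' k = rk P k', rk P' k' = rk P k &
    forall j, j != k -> j != k' -> rk P' j = rk P j].

Fixpoint adj_chain (x : pref) (s : seq pref) : Prop :=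
  match s with
  | [::] => True
  | y :: s' => adjacent x y /\ adj_chain y s'
  end.

Definition path_in (D : {set pref}) (p : seq pref) : Prop :=
  match p with
  | [::] => False
  | x :: s => [/\ uniq p, all (fun q => q \in D) p & adj_chain x s]
  end.

Definition joined (D : {set pref}) (P P' : pref) : Prop :=
  exists p, [/\ path_in D p, head P p = P & last P p = P'].

Definition connected_dom (D : {set pref}) : Prop :=
  forall P P', P \in D -> P' \in D -> joined D P P'.

Definition top_connected (D : {set pref}) (P P' : pref) : Prop :=
  exists p, [/\ path_in D p, head P p = P, last P p = P' &
                all (fun q => top q == top P) p].

Definition in_TCC (D : {set pref}) (P P' : pref) : Prop :=
  P' = P \/ (P' \in D /\ top_connected D P P').

Definition neighbour (D : {set pref}) (S : pref -> Prop) (P : pref) : Prop :=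
  [/\ P \in D, ~ S P & exists2 Q, S Q & adjacent Q P].

Definition connected_two_neighbours (D : {set pref}) : Prop :=
  connected_dom D /\
  forall P, P \in D -> exists P' P'',
    [/\ neighbour D (in_TCC D P) P', neighbour D (in_TCC D P) P'' & top P' != top P''].

Definition unanimous (D : {set pref}) (f : pref -> pref -> A) : Prop :=
  forall P1 P2 a, P1 \in D -> P2 \in D -> top P1 = a -> top P2 = a -> f P1 P2 = a.

Definition strategy_proof (D : {set pref}) (f : pref -> pref -> A) : Prop :=
  (forall P1 P2 P1', P1 \in D -> P2 \in D -> P1' \in D ->
      ~~ prefers P1 (f P1' P2) (f P1 P2)) /\
  (forall P1 P2 P2', P1 \in D -> P2 \in D -> P2' \in D ->
      ~~ prefers P2 (f P1 P2') (f P1 P2)).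

Definition dictatorship (D : {set pref}) (f : pref -> pref -> A) : Prop :=
  (forall P1 P2, P1 \in D -> P2 \in D -> f P1 P2 = top P1) \/
  (forall P1 P2, P1 \in D -> P2 \in D -> f P1 P2 = top P2).

End Prefs.

From mathcomp Require Import all_boot.
Set Implicit Arguments. Unset Strict Implicit. Unset Printing Implicit Defensive.

(* Call (x, y) an edge when some X, X' in D differ only by swapping their top
   two alternatives x and y.  At the profile (X, X') the outcome is x or y; if
   it is x, voter 1 wins every profile with tops x and y, i.e. is decisive on
   (x, y).  Strategy-proofness moves decisiveness along non-backtracking walks:
   decisive on (a, c) and an edge (c, b) with b <> a give decisiveness on (c, b).
   The domain conditions make the edge graph connected without dead ends, where
   non-backtracking walks starting from one edge reach every vertex.  Hence a
   chain of decisive pairs joins top P1 to top P2; walking it backwards from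
   top P2, which voter 1 obtains by unanimity, shows that voter 1 can obtain
   top P1 against P2, so by strategy-proofness f P1 P2 = top P1. *)

Section Preference.
Variable A : finType.
Implicit Types (P Q : pref A) (x y z w : A).

(* When #|A| = 1, [inord 1] is [ord0]; no top swap exists then, so this junk
   value is never used. *)
Definition second P : A := rk P (inord 1).

Lemma rk_inj P : injective (rk P).
Proof. exact/injectiveP/(valP P). Qed.

Lemma rank_of_rk P i : rank_of P (rk P i) = i.
Proof. by rewrite /rank_of /rk codomE (index_map (@rk_inj P)) index_enum_ord. Qed.

Lemma rk_surj P x : exists i, rk P i = x.
Proof.
have A_gt0 : 0 < #|A| by apply/card_gt0P; exists (top P).
have /codomP [i ->] : x \in codom (val P).
  by apply: inj_card_onto; [exact: rk_inj | rewrite card_ord prednK].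
by exists i.
Qed.

Lemma prefers_rk P i j : prefers P (rk P i) (rk P j) = (i < j).
Proof. by rewrite /prefers !rank_of_rk. Qed.

Lemma prefers_top P z : z != top P -> prefers P (top P) z.
Proof.
case: (rk_surj P z) => i <- ne; rewrite /top prefers_rk lt0n.
by apply: contraNneq ne => i0; apply/eqP; congr rk; apply: val_inj.
Qed.

Lemma prefers_topN P z : ~~ prefers P (top P) z -> z = top P.
Proof. by move=> h; apply/eqP; apply: contraNT h; apply: prefers_top. Qed.

Lemma rank_gt1 P z : z != top P -> z != second P ->
  exists2 i : 'I_(#|A|.-1.+1), 1 < i & rk P i = z.
Proof.
case: (rk_surj P z) => i <- ne0 ne1; exists i => //.
rewrite ltnNge leq_eqVlt ltnS leqn0; apply/norP; split.
  apply: contraNneq ne1 => i1; apply/eqP; congr rk; apply: val_inj.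
  by rewrite /= inordK // -i1 ltn_ord.
by apply: contraNneq ne0 => i0; apply/eqP; congr rk; apply: val_inj.
Qed.

Lemma prefers_second P z : z != top P -> z != second P -> prefers P (second P) z.
Proof.
move=> ne0 ne1; case: (rank_gt1 ne0 ne1) => i i_gt1 <-.
by rewrite prefers_rk inordK // (ltn_trans i_gt1).
Qed.

Lemma prefers_total P x y : x != y -> ~~ prefers P x y -> prefers P y x.
Proof.
case: (rk_surj P x) => i <-; case: (rk_surj P y) => j <-.
rewrite !prefers_rk -leqNgt leq_eqVlt => ne /orP [/eqP/val_inj ji|//].
by rewrite ji eqxx in ne.
Qed.

Definition adjacentb P P' : bool :=
  [exists k, exists k' : 'I_(#|A|.-1.+1), [&& val k' == (val k).+1,
     rk P' k == rk P k', rk P' k' == rk P k &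
     [forall j, (j != k) ==> (j != k') ==> (rk P' j == rk P j)]]].

Lemma adjacentP P P' : reflect (adjacent P P') (adjacentb P P').
Proof.
apply: (iffP existsP) => [[k /existsP [k' /and4P [/eqP ek' /eqP e /eqP e' /forallP rkE]]]
                        | [k [k' [ek' e e' rkE]]]].
  by exists k, k'; split => // j jk jk'; apply/eqP; move: (rkE j); rewrite jk jk'.
exists k; apply/existsP; exists k'; rewrite ek' e e' !eqxx /=.
by apply/forallP => j; apply/implyP => jk; apply/implyP => jk'; rewrite rkE.
Qed.

Lemma adjacent_sym P P' : adjacent P P' -> adjacent P' P.
Proof.
case=> k [k' [ek' e e' rkE]]; exists k, k'; split => // j jk jk'.
by rewrite rkE.
Qed.

Definition top_swap P P' : bool := adjacentb P P' && (top P != top P').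

Lemma top_swap_sym P P' : top_swap P P' -> top_swap P' P.
Proof.
by case/andP => /adjacentP/adjacent_sym/adjacentP adj ne; rewrite /top_swap adj eq_sym.
Qed.

Lemma top_swapE P P' : top_swap P P' ->
  [/\ top P' = second P, second P' = top P &
      forall j : 'I_(#|A|.-1.+1), 1 < j -> rk P' j = rk P j].
Proof.
case/andP => /adjacentP [k [k' [ek' e e' rkE]]] ne.
have k0 : k = 0 :> nat.
  apply/eqP; apply: contraNT ne => k0; rewrite /top rkE //.
    by apply: contraNneq k0 => <-.
  by apply/eqP => /(congr1 val); rewrite ek'.
have k'1 : k' = 1 :> nat by move: ek' => /= ->; rewrite k0.
have {k0}k_0 : k = ord0 by apply: val_inj.
have {k'1}k'_1 : k' = inord 1.
  by apply: val_inj => /=; rewrite inordK; [exact: k'1 | rewrite -k'1 ltn_ord].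
rewrite {}k_0 {}k'_1 in e e' rkE.
split => // j j_gt1; apply: rkE; apply: contraTneq (j_gt1) => -> //.
by rewrite inordK // (leq_trans j_gt1) // ltnW.
Qed.

Lemma prefers_top_swap P P' z w : top_swap P P' ->
  z != top P -> z != second P -> w != top P -> w != second P ->
  prefers P' z w = prefers P z w.
Proof.
case/top_swapE => _ _ rkE z0 z1 w0 w1.
case: (rank_gt1 z0 z1) => i i_gt1 <-; case: (rank_gt1 w0 w1) => j j_gt1 <-.
by rewrite -{1}(rkE i i_gt1) -{1}(rkE j j_gt1) !prefers_rk.
Qed.

Lemma top_swap2_prefers Q Q' T' T w : top_swap Q Q' -> top_swap T' T ->
  top T' = top Q' -> top T != top Q ->
  ~~ prefers Q (top T) w -> ~~ prefers Q' w (top T) -> prefers T' w (top Q).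
Proof.
move=> sQ sT eT nTQ bQw wQ'b.
have /andP [_ nQQ'] := sQ; have /andP [_ nT'T] := sT.
case: (top_swapE sQ) => eQ1 eQ2 _; case: (top_swapE sT) => eT1 _ _.
have nTQ' : top T != top Q' by rewrite -eT eq_sym.
case: (eqVneq w (top T)) => [->|nwb].
  by rewrite eT1 prefers_second // ?eT // -eT1 eq_sym.
case: (eqVneq w (top Q)) => [wa|nwa].
  by move: wQ'b; rewrite wa -eQ2 prefers_second // eQ2.
case: (eqVneq w (top Q')) => [wc|nwc].
  by move: wQ'b; rewrite wc prefers_top.
move: wQ'b; rewrite (prefers_top_swap sQ) -?eQ1 // => /(prefers_total nwb).
by rewrite (negbTE bQw).
Qed.

End Preference.

Lemma connect_ind (T : finType) (e : rel T) x (Pr : T -> Prop) : Pr x ->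
  (forall y z, connect e x y -> Pr y -> e y z -> Pr z) ->
  forall y, connect e x y -> Pr y.
Proof.
move=> Prx step y /connectP [p + ->].
elim/last_ind: p => [//|p z IH]; rewrite rcons_path last_rcons => /andP [xp pz].
by apply: step (IH xp) pz; apply/connectP; exists p.
Qed.

Section NonBacktracking.
Variables (T : finType) (E : rel T).
Hypothesis E_sym : symmetric E.
Hypothesis E_connected : forall x y, connect E x y.
Hypothesis E_no_dead_end : forall x w, exists2 y, E x y & y != w.

Definition nbstep : rel (T * T) :=
  fun d d' => [&& d'.1 == d.2, E d'.1 d'.2 & d'.2 != d.1].

Section FromDart.
Variables u v : T.
Hypothesis Euv : E u v.

Let reached d := connect nbstep (u, v) d.

Lemma reached_edge d : reached d -> E d.1 d.2.
Proof. by apply: (connect_ind (Pr := fun d => E d.1 d.2)) => // d1 d2 _ _ /and3P []. Qed.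

Lemma reached_step w x y : reached (w, x) -> E x y -> y != w -> reached (x, y).
Proof.
by move=> Rwx Exy yw; apply: connect_trans Rwx (connect1 _); rewrite /nbstep eqxx Exy.
Qed.

Lemma reached_pred d : reached d -> d = (u, v) \/ exists2 d', reached d' & nbstep d' d.
Proof.
by apply: (connect_ind (Pr := fun d => d = (u, v) \/ exists2 d', reached d' & nbstep d' d))
  => [|d1 d2 Rd1 _ s]; [left | right; exists d1].
Qed.

Let indeg x := \sum_w reached (w, x).
Let outdeg x := \sum_y reached (x, y).

(* Unless every dart into x is reversible, x has a single dart coming in and,
   having no dead end, at least one going out. *)
Lemma indeg_le_outdeg x : indeg x <= outdeg x.
Proof.
have [rev | ] := boolP [forall w, reached (w, x) ==> reached (x, w)].
  apply: leq_sum => w _; move/forallP/(_ w): rev.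
  by case: (reached (w, x)); case: (reached (x, w)).
rewrite negb_forall => /existsP [w]; rewrite negb_imply => /andP [Rwx nRxw].
have Exw : E x w by rewrite E_sym; apply: reached_edge Rwx.
have -> : indeg x = 1.
  rewrite /indeg (bigD1 w) //= Rwx big1 // => w' w'w.
  case Rw'x : (reached (w', x)) => //; case/negP: nRxw.
  by apply: reached_step Rw'x Exw _; rewrite eq_sym.
have [y Exy yw] := E_no_dead_end x w.
by rewrite /outdeg (bigD1 y) //= (reached_step Rwx Exy yw).
Qed.

(* Total indegree equals total outdegree, so [indeg_le_outdeg] leaves no room
   for the strict inequality at [u] that an empty indegree would give. *)
Lemma reached_into_start : exists w, reached (w, u).
Proof.
apply/existsP; apply: contraT => none.
have in0 : indeg u = 0.
  rewrite /indeg big1 // => w _; case Rwu : (reached (w, u)) => //.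
  by case/negP: none; apply/existsP; exists w.
have : \sum_x indeg x < \sum_x outdeg x.
  have out1 : 0 < outdeg u by rewrite /outdeg (bigD1 v) //= /reached connect0.
  rewrite (bigD1 u) //= [X in _ < X](bigD1 u) //= in0 add0n -add1n.
  by apply: leq_add out1 _; apply: leq_sum => x _; apply: indeg_le_outdeg.
by rewrite /indeg /outdeg exchange_big ltnn.
Qed.

Lemma reached_heads b : exists w, reached (w, b).
Proof.
apply: (connect_ind (Pr := fun x => exists w, reached (w, x))) (E_connected v b).
  by exists u; apply: connect0.
move=> x y _ [w Rwx] Exy.
have [->|yw] := eqVneq y w; last by exists x; apply: reached_step Exy yw.
case: (reached_pred Rwx) => [[-> _]|[d Rd /and3P [/eqP /= -> _ _]]].
  exact: reached_into_start.
by exists d.1; rewrite -surjective_pairing.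
Qed.

End FromDart.

Lemma nonbacktracking_connect (W : rel T) u v : E u v -> W u v ->
  (forall a c b, W a c -> E c b -> b != a -> W c b) -> forall x y, connect W x y.
Proof.
move=> Euv Wuv W_nb x y.
have W_reached d : connect nbstep (u, v) d -> W d.1 d.2.
  apply: (connect_ind (Pr := fun d => W d.1 d.2)) => // d1 d2 _ W1 /and3P [/eqP -> E2 n2].
  exact: W_nb W1 E2 n2.
have [w Rwx] := reached_heads Euv x.
have [w' Rw'y] := reached_heads (reached_edge Euv Rwx) y.
apply: (connect_ind (Pr := fun d => connect W x d.2)) Rw'y => [|d1 d2 Rd1 W1 s].
  exact: connect0.
apply: connect_trans W1 (connect1 _); case/and3P: (s) => /eqP <- _ _.
by apply: W_reached; apply: connect_trans Rwx (connect_trans Rd1 (connect1 s)).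
Qed.

End NonBacktracking.

Section Domain.
Variables (A : finType) (D : {set pref A}).
Implicit Types (P Q : pref A) (x y : A).

Definition top_edge : rel A := fun x y =>
  [exists X in D, exists X' in D, [&& top_swap X X', top X == x & top X' == y]].

Lemma top_edge_sym : symmetric top_edge.
Proof.
suff edge_sym x y : top_edge x y -> top_edge y x.
  by move=> x y; apply/idP/idP; apply: edge_sym.
case/exists_inP => X hX /exists_inP [X' hX' /and3P [sw ex ey]].
apply/exists_inP; exists X' => //; apply/exists_inP; exists X => //.
by rewrite top_swap_sym ?ex ?ey.
Qed.

Lemma adj_chain_top_edge P s : all (mem D) (P :: s) -> adj_chain P s ->
  connect top_edge (top P) (top (last P s)).
Proof.
elim: s P => [|Q s IH] P /=; first by move=> _ _; apply: connect0.
case/and3P => hP hQ hs [adjPQ chQ]; have := IH Q; rewrite /= hQ hs => /(_ isT chQ).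
have [->//|ne] := eqVneq (top P) (top Q).
apply: connect_trans (connect1 _); apply/exists_inP; exists P => //.
by apply/exists_inP; exists Q; rewrite // /top_swap ne !eqxx !andbT; apply/adjacentP.
Qed.

Lemma top_edge_connect : minimally_rich D -> connected_dom D ->
  forall x y, connect top_edge x y.
Proof.
move=> rich conn x y; case: (rich x) => P hP <-; case: (rich y) => Q hQ <-.
case: (conn P Q hP hQ) => p []; case: p => [//|P' s] [_ hs ch] /= <- <-.
exact: adj_chain_top_edge.
Qed.

Definition tcc_step a : rel (pref A) :=
  fun Q Q' => [&& Q' \in D, top Q' == a & adjacentb Q Q'].

Lemma path_tcc_step a P s : path (tcc_step a) P s <->
  adj_chain P s /\ all (fun Q => (Q \in D) && (top Q == a)) s.
Proof.
elim: s P => [|Q s IH] P /=; first by split.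
split => [/andP [/and3P [hQ tQ /adjacentP adjPQ] /IH [ch al]] |
          [[/adjacentP adjPQ ch] /andP [/andP [hQ tQ] al]]].
  by split; [split | rewrite hQ tQ al].
by rewrite /tcc_step hQ tQ adjPQ; apply/IH.
Qed.

Lemma in_TCC_connect P Q : in_TCC D P Q -> connect (tcc_step (top P)) P Q.
Proof.
case=> [->|[_ [p [pin hd <- al]]]]; first exact: connect0.
case: p pin hd al => [//|P0 s] [_ hs ch] /= P0P /andP [_ al]; subst P0.
apply/connectP; exists s => //; apply/path_tcc_step; split => //.
apply/allP => R Rs; have Rps : R \in P :: s by rewrite inE Rs orbT.
by rewrite (allP hs _ Rps) (allP al _ Rs).
Qed.

Lemma connect_in_TCC P Q : P \in D -> connect (tcc_step (top P)) P Q -> in_TCC D P Q.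
Proof.
move=> hP /connectP [p pth ->]; case/shortenP: pth => s /path_tcc_step [ch al] uniq_s _.
have [->|ne] := eqVneq (last P s) P; [by left | right].
have hs : all (fun R => R \in D) s by apply/allP => R /(allP al) /andP [].
split.
  by move: (mem_last P s); rewrite inE (negbTE ne) => /(allP hs).
exists (P :: s); split => //=; first by rewrite hP.
by rewrite eqxx; apply/allP => R /(allP al) /andP [].
Qed.

Lemma in_TCC_top P Q : P \in D -> in_TCC D P Q -> Q \in D /\ top Q = top P.
Proof.
move=> hP /in_TCC_connect.
apply: (connect_ind (Pr := fun Q => Q \in D /\ top Q = top P)) => //.
by move=> Q1 Q2 _ _ /and3P [hQ2 /eqP tQ2 _].
Qed.

Lemma neighbour_top_edge P P' : P \in D -> neighbour D (in_TCC D P) P' ->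
  top_edge (top P) (top P').
Proof.
move=> hP [hP' notin [Q inQ /adjacentP adjQP']]; have [hQ tQ] := in_TCC_top hP inQ.
have ne : top Q != top P'.
  apply/eqP => tQP'; apply: notin; apply: connect_in_TCC hP _.
  apply: connect_trans (in_TCC_connect inQ) (connect1 _).
  by rewrite /tcc_step hP' -tQP' tQ eqxx adjQP'.
apply/exists_inP; exists Q => //; apply/exists_inP; exists P' => //.
by rewrite /top_swap adjQP' ne tQ !eqxx.
Qed.

Lemma top_edge_no_dead_end : minimally_rich D -> connected_two_neighbours D ->
  forall x w, exists2 y, top_edge x y & y != w.
Proof.
move=> rich [_ two] x w; case: (rich x) => P hP <-.
case: (two P hP) => P1 [P2 [/(neighbour_top_edge hP) e1 /(neighbour_top_edge hP) e2 ne]].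
have [tw|] := eqVneq (top P1) w; last by exists (top P1).
by exists (top P2) => //; rewrite -tw eq_sym.
Qed.

Lemma exists_top_swap : 0 < #|A| -> minimally_rich D -> connected_two_neighbours D ->
  exists X X', [/\ X \in D, X' \in D & top_swap X X'].
Proof.
move=> /card_gt0P [x _] rich two; case: (top_edge_no_dead_end rich two x x) => y.
by case/exists_inP => X hX /exists_inP [X' hX' /andP [sw _]] _; exists X, X'.
Qed.

End Domain.

Section TopSwapOutcomes.
Variables (A : finType) (D : {set pref A}) (f : pref A -> pref A -> A).
Hypotheses (f_unanimous : unanimous D f) (f_sp : strategy_proof D f).
Implicit Types (X Y : pref A).

Definition option1 P2 z := exists2 X, X \in D & f X P2 = z.

Lemma truthful_top1 P1 P2 : P1 \in D -> P2 \in D ->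
  option1 P2 (top P1) -> f P1 P2 = top P1.
Proof. by move=> h1 h2 [X hX fX]; apply: prefers_topN; rewrite -fX; apply: f_sp.1. Qed.

Lemma truthful_second1 P1 X P2 : P1 \in D -> X \in D -> P2 \in D ->
  f X P2 = second P1 -> f P1 P2 = top P1 \/ f P1 P2 = second P1.
Proof.
move=> h1 hX h2 fX.
have [|n0] := eqVneq (f P1 P2) (top P1); first by left.
have [|n1] := eqVneq (f P1 P2) (second P1); first by right.
by move: (f_sp.1 _ _ _ h1 h2 hX); rewrite fX prefers_second.
Qed.

Lemma f_top_swap X X' : X \in D -> X' \in D -> top_swap X X' ->
  f X X' = top X \/ f X X' = top X'.
Proof.
move=> hX hX' sw; have [e1 _ _] := top_swapE sw.
by rewrite e1; apply: (truthful_second1 hX hX' hX'); rewrite -e1; apply: f_unanimous.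
Qed.

Definition wins1 X X' := [&& X \in D, X' \in D, top_swap X X' & f X X' == top X].

(* Otherwise voter 2, whose top is [top X'], would report [P2] at [(X, X')]. *)
Lemma wins1_option X X' P2 : wins1 X X' -> P2 \in D ->
  option1 P2 (top X') -> f X P2 = top X.
Proof.
case/and4P => hX hX' sw /eqP fX h2 [Y hY fY]; have [e1 _ _] := top_swapE sw.
case: (truthful_second1 hX hY h2 _) => [|//|fX2]; first by rewrite fY e1.
have /andP [_ ne] := sw.
by move: (f_sp.2 _ _ _ hX hX' h2); rewrite fX2 fX -e1 prefers_top // eq_sym.
Qed.

Lemma wins1_decisive X X' X1 Y1 : wins1 X X' -> X1 \in D -> Y1 \in D ->
  top X1 = top X -> top Y1 = top X' -> f X1 Y1 = top X.
Proof.
move=> wX h1 h2 t1 t2; have /and4P [hX hX' _ _] := wX.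
rewrite -t1; apply: truthful_top1 => //; exists X; rewrite // t1.
apply: wins1_option wX (h2) _; exists X' => //; exact: f_unanimous hX' h2 erefl t2.
Qed.

End TopSwapOutcomes.

Lemma unanimous_flip (A : finType) (D : {set pref A}) f :
  unanimous D f -> unanimous D (fun P1 P2 => f P2 P1).
Proof. by move=> fU P1 P2 a h1 h2 e1 e2; apply: fU. Qed.

Lemma strategy_proof_flip (A : finType) (D : {set pref A}) f :
  strategy_proof D f -> strategy_proof D (fun P1 P2 => f P2 P1).
Proof. by case=> sp1 sp2; split => P1 P2 P' h1 h2 h'; [apply: sp2 | apply: sp1]. Qed.

Section Dictatorship.
Variables (A : finType) (D : {set pref A}) (f : pref A -> pref A -> A).
Hypotheses (f_unanimous : unanimous D f) (f_sp : strategy_proof D f).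

Definition decisive1 : rel A := fun x y =>
  [exists X, exists X', [&& wins1 D f X X', top X == x & top X' == y]].

Lemma decisive1_top_edge x y : decisive1 x y -> top_edge D x y.
Proof.
case/existsP => X /existsP [X' /and3P [/and4P [hX hX' sw _] ex ey]].
by apply/exists_inP; exists X => //; apply/exists_inP; exists X'; rewrite // sw ex ey.
Qed.

(* Were voter 2 to win at (T', T), with tops c and b, the outcome f Q T would
   let voter 1 at (Q, T), voter 1 at (Q', T) or voter 2 at (Q, T') manipulate. *)
Lemma decisive1_snake a c b : decisive1 a c -> top_edge D c b -> b != a -> decisive1 c b.
Proof.
case/existsP => Q /existsP [Q' /and3P [wQ /eqP tQ /eqP tQ']].
case/exists_inP => T' hT' /exists_inP [T hT /and3P [sT /eqP tT' /eqP tT]] ba.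
have /and4P [hQ hQ' sQ /eqP fQ] := wQ.
apply/existsP; exists T'; apply/existsP; exists T.
rewrite tT' tT !eqxx !andbT /wins1 hT' hT sT /=.
case: (f_top_swap f_unanimous f_sp hT' hT sT) => [->|fT]; first exact: eqxx.
have eT : top T' = top Q' by rewrite tT' tQ'.
have fQT' : f Q T' = top Q := wins1_decisive f_unanimous f_sp wQ hQ hT' erefl eT.
have wT : wins1 D (fun P1 P2 => f P2 P1) T T'.
  by rewrite /wins1 hT hT' top_swap_sym //= fT eqxx.
have fQ'T : f Q' T = top T := wins1_decisive (unanimous_flip f_unanimous)
  (strategy_proof_flip f_sp) wT hT hQ' erefl (esym eT).
have nTQ : top T != top Q by rewrite tT tQ.
have bQw := f_sp.1 _ _ _ hQ hT hQ'; have wQ'b := f_sp.1 _ _ _ hQ' hT hQ.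
rewrite fQ'T in bQw wQ'b.
by move: (f_sp.2 _ _ _ hQ hT' hT); rewrite fQT' (top_swap2_prefers sQ sT eT nTQ bQw wQ'b).
Qed.

Lemma wins1_dictator X X' : minimally_rich D -> connected_two_neighbours D ->
  wins1 D f X X' -> forall P1 P2, P1 \in D -> P2 \in D -> f P1 P2 = top P1.
Proof.
move=> rich two wX P1 P2 h1 h2.
have dX : decisive1 (top X) (top X').
  by apply/existsP; exists X; apply/existsP; exists X'; rewrite wX !eqxx.
have conn := nonbacktracking_connect (top_edge_sym D) (top_edge_connect rich two.1)
  (top_edge_no_dead_end rich two) (decisive1_top_edge dX) dX decisive1_snake.
have back y : connect decisive1 (top P1) y -> option1 D f P2 y -> option1 D f P2 (top P1).
  apply: (connect_ind (Pr := fun y => option1 D f P2 y -> option1 D f P2 (top P1))) => //.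
  move=> {}y z _ IH /existsP [Y /existsP [Y' /and3P [wY /eqP ey /eqP ez]]] opt_z.
  apply: IH; rewrite -ey; exists Y; first by case/and3P: wY.
  by apply: (wins1_option f_sp wY h2); rewrite ez.
apply: (truthful_top1 f_sp h1 h2); apply: back (conn _ (top P2)) _.
by exists P2 => //; apply: f_unanimous.
Qed.

End Dictatorship.

Theorem proposition2 (A : finType) (D : {set pref A}) (f : pref A -> pref A -> A) :
  2 < #|A| ->
  minimally_rich D ->
  connected_two_neighbours D ->
  unanimous D f ->
  strategy_proof D f ->
  dictatorship D f.
Proof.
move=> A_gt2 rich two fU fSP.
have [X [X' [hX hX' sw]]] := exists_top_swap (ltnW (ltnW A_gt2)) rich two.
case: (f_top_swap fU fSP hX hX' sw) => fX; [left | right].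
  apply: (wins1_dictator fU fSP rich two (X := X) (X' := X')).
  by rewrite /wins1 hX hX' sw fX eqxx.
move=> P1 P2 h1 h2.
apply: (wins1_dictator (unanimous_flip fU) (strategy_proof_flip fSP) rich two
  (X := X') (X' := X)) => //.
by rewrite /wins1 hX' hX top_swap_sym //= fX eqxx.
Qed.
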